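(* Let $k\ge1$ be an integer, $\alpha,\beta>0$, $b>0$, $\omega,\eta\in\mathbb{C}$ with $|\omega|=|\eta|=1$, $u,v\in[-1,1]$. Put $r=\sqrt{s^2+b^2}$, $R=s+r$, $w=-ib/R$, $X(u,v)=(\mathrm{Im}\,\omega^{k})(\mathrm{Im}\,\eta^{k})u+(\mathrm{Re}\,\omega^{k})(\mathrm{Re}\,\eta^{k})v$, $q(u,v)=\arccos X(u,v)$, \[A(s,q)=\prod_{l=0}^{k-1}\Big(s+ib\cos\Big(\frac{q+2\pi l}{k}\Big)\Big),\qquad B(s)=s+ib\,\mathrm{Re}(\omega\bar\eta),\] \[f_{I_{2k}}(s)=\frac{2^{k(\alpha+\beta)}}{rR^{k(\alpha+\beta)}}\frac{1-w^2}{1-w^{2k}}\,\frac{1-2w^{k}\mathrm{Re}(\omega^{k}\bar\eta^{k})+w^{2k}}{1-2\mathrm{Re}(\omega\bar\eta)w+w^2}\,\frac{1-w^{2k}}{(1-2w^{k}X(u,v)+w^{2k})^{\alpha+\beta+1}},\] \[g_{I_{k}}(s)=\frac{2^{k\alpha}}{rR^{k\alpha}}\frac{1-w^2}{1-w^{2k}}\,\frac{1-2w^{k}\mathrm{Re}(\omega^{k}\bar\eta^{k})+w^{2k}}{1-2\mathrm{Re}(\omega\bar\eta)w+w^2}\,\frac{1-w^{2k}}{(1-2w^{k}X(u,1)+w^{2k})^{\alpha+1}}.\] Then, for $s$ real and sufficiently large, \[f_{I_{2k}}(s)=\frac{A(s,q(1,1))}{B(s)[A(s,q(u,v))]^{\alpha+\beta+1}}=\frac{1}{B(s)[A(s,q(u,v))]^{\alpha+\beta}}+\frac{(-ib)^{k}\cos(q(u-1,v-1))}{2^{k-1}B(s)[A(s,q(u,v))]^{\alpha+\beta+1}},\]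 \[g_{I_{k}}(s)=\frac{A(s,q(1,1))}{B(s)[A(s,q(u,1))]^{\alpha+1}}=\frac{1}{B(s)[A(s,q(u,1))]^{\alpha}}+\frac{(-ib)^{k}\cos(q(u-1,0))}{2^{k-1}B(s)[A(s,q(u,1))]^{\alpha+1}}.\]
   Context: Non-integer powers are principal branches; $\arccos$ is extended to complex arguments so that $\cos(\arccos X)=X$ (needed since $X(u-1,v-1)$ may lie outside $[-1,1]$). *)

From Stdlib Require Import Reals.
From Coquelicot Require Import Coquelicot.
Open Scope R_scope.

(* Principal argument in (-PI, PI]. *)
Definition Carg (z : C) : R :=
  let x := Re z in let y := Im z in
  if Rlt_dec 0 x then atan (y / x)
  else if Rlt_dec x 0 then
    (if Rle_dec 0 y then atan (y / x) + PI else atan (y / x) - PI)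
  else if Rlt_dec 0 y then PI / 2
  else if Rlt_dec y 0 then - (PI / 2) else 0.

Definition Cexp (z : C) : C :=
  (RtoC (exp (Re z)) * (RtoC (cos (Im z)) + Ci * RtoC (sin (Im z))))%C.

Definition Clog (z : C) : C := (RtoC (ln (Cmod z)) + Ci * RtoC (Carg z))%C.

(* Principal power z^a = exp(a Log z) (with 0^a = 0). *)
Definition Cpowr (z : C) (a : R) : C :=
  if Req_EM_T (Cmod z) 0 then RtoC 0 else Cexp (RtoC a * Clog z)%C.

(* Complex cosine, principal square root and principal arccos;
   cos (Carccos z) = z holds for every complex z. *)
Definition Ccos (z : C) : C := ((Cexp (Ci * z) + Cexp (- (Ci * z))) / RtoC 2)%C.

Definition Csqrt (z : C) : C :=
  if Req_EM_T (Cmod z) 0 then RtoC 0 else Cexp (Clog z / RtoC 2)%C.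

Definition Carccos (z : C) : C :=
  (- Ci * Clog (z + Ci * Csqrt (RtoC 1 - z * z)))%C.

Fixpoint Cprod (n : nat) (F : nat -> C) : C :=
  match n with
  | O => RtoC 1
  | S m => (Cprod m F * F m)%C
  end.

Definition Xf (k : nat) (om et : C) (u v : R) : R :=
  Im (Cpow om k) * Im (Cpow et k) * u + Re (Cpow om k) * Re (Cpow et k) * v.

Definition qf (k : nat) (om et : C) (u v : R) : C := Carccos (RtoC (Xf k om et u v)).

Definition Af (k : nat) (b s : R) (q : C) : C :=
  Cprod k (fun l => (RtoC s + Ci * RtoC b *
                     Ccos ((q + RtoC (2 * PI * INR l)) / RtoC (INR k)))%C).

Definition Bf (b : R) (om et : C) (s : R) : C :=
  (RtoC s + Ci * RtoC b * RtoC (Re (om * Cconj et)))%C.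

Definition rf (b s : R) : R := sqrt (s ^ 2 + b ^ 2).
Definition Rf (b s : R) : R := s + rf b s.
Definition wf (b s : R) : C := (- (Ci * RtoC b) / RtoC (Rf b s))%C.

(* Common structure of f_{I_{2k}} and g_{I_k}: exponent gamma (= alpha+beta
   or alpha) and the value X0 (= X(u,v) or X(u,1)). *)
Definition fgen (k : nat) (b : R) (om et : C) (gam X0 s : R) : C :=
  let r := rf b s in let R0 := Rf b s in let w := wf b s in
  (RtoC (Rpower 2 (INR k * gam) / (r * Rpower R0 (INR k * gam)))
   * ((RtoC 1 - Cpow w 2) / (RtoC 1 - Cpow w (2 * k)))
   * ((RtoC 1 - RtoC 2 * Cpow w k * RtoC (Re (Cpow om k * Cconj (Cpow et k)))
        + Cpow w (2 * k))
      / (RtoC 1 - RtoC 2 * RtoC (Re (om * Cconj et)) * w + Cpow w 2))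
   * ((RtoC 1 - Cpow w (2 * k))
      / Cpowr (RtoC 1 - RtoC 2 * Cpow w k * RtoC X0 + Cpow w (2 * k)) (gam + 1)))%C.

Definition f_I2k (k : nat) (al be b : R) (om et : C) (u v s : R) : C :=
  fgen k b om et (al + be) (Xf k om et u v) s.

Definition g_Ik (k : nat) (al b : R) (om et : C) (u s : R) : C :=
  fgen k b om et al (Xf k om et u 1) s.

(* With R = s + sqrt(s^2 + b^2) and w = -ib/R, the relation R^2 = 2sR + b^2 gives
   s + ib cos t = (R/2)(1 - w e^{it})(1 - w e^{-it}).  Multiplying over the shifts
   t = (q + 2 pi l)/k, the k-th roots of unity collapse the products, so
   A(s,q) = (R/2)^k (1 - 2 w^k cos q + w^{2k});  likewise
   B(s)(1 - w^2) = r (1 - 2 Re(om conj et) w + w^2).  For s > 0 we have |w| < 1, so none of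
   these factors vanishes, and the positive real factor (R/2)^k splits off the principal
   powers.  With cos(arccos X) = X both formulas become rational identities in w^k; the
   second also uses X(u-1,v-1) = X(u,v) - X(1,1) and (-ib)^k = R^k w^k. *)

From Stdlib Require Import Reals Lra Lia Psatz.
From Coquelicot Require Import Coquelicot.
From mathcomp Require ssreflect ssrfun ssrbool eqtype ssrnat fintype bigop ssralg poly complex Rstruct.
Open Scope R_scope.
Set Bullet Behavior "Strict Subproofs".

(** * Complex exponential, logarithm and powers *)

Lemma Cexp_add (a c : C) : Cexp (a + c)%C = (Cexp a * Cexp c)%C.
Proof.
  destruct a as [a1 a2], c as [c1 c2]; unfold Cexp.
  apply injective_projections; simpl; rewrite exp_plus, cos_plus, sin_plus; ring.
Qed.

Lemma Cexp_0 : Cexp (RtoC 0) = RtoC 1.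
Proof.
  unfold Cexp; apply injective_projections; simpl; rewrite exp_0, cos_0, sin_0; ring.
Qed.

Lemma Cexp_mul_opp (a : C) : (Cexp a * Cexp (- a))%C = RtoC 1.
Proof. rewrite <- Cexp_add, Cplus_opp_r. apply Cexp_0. Qed.

Lemma Cexp_neq0 (a : C) : Cexp a <> RtoC 0.
Proof.
  intro H. apply C1_nz. rewrite <- (Cexp_mul_opp a), H. apply Cmult_0_l.
Qed.

Lemma Cexp_natmul (n : nat) (a : C) : Cexp (RtoC (INR n) * a)%C = Cpow (Cexp a) n.
Proof.
  induction n as [|n IH].
  - rewrite Cmult_0_l. apply Cexp_0.
  - rewrite S_INR, RtoC_plus, Cmult_plus_distr_r, Cmult_1_l, Cexp_add, IH.
    simpl. apply Cmult_comm.
Qed.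

Lemma Cexp_Ci_mul (t : R) : Cexp (Ci * RtoC t)%C = (cos t, sin t).
Proof.
  unfold Cexp; apply injective_projections; simpl;
  replace (0 * t - 1 * 0) with 0 by ring; replace (0 * 0 + 1 * t) with t by ring;
  rewrite exp_0; ring.
Qed.

Lemma sqrt_sum_sqr_factor (x y : R) :
  x <> 0 -> sqrt (x ^ 2 + y ^ 2) = Rabs x * sqrt (1 + (y / x)²).
Proof.
  intro Hx. replace (x ^ 2 + y ^ 2) with ((Rabs x)² * (1 + (y / x)²)).
  - rewrite sqrt_mult, sqrt_Rsqr by (auto using Rabs_pos, Rle_0_sqr;
      assert (0 <= (y / x)²) by apply Rle_0_sqr; lra).
    reflexivity.
  - rewrite <- Rsqr_abs. unfold Rsqr. field. exact Hx.
Qed.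

Lemma Carg_polar (t : C) : t <> RtoC 0 ->
  Cmod t * cos (Carg t) = Re t /\ Cmod t * sin (Carg t) = Im t.
Proof.
  intro Ht. destruct t as [x y]. unfold Carg, Cmod, Re, Im; cbn [fst snd].
  assert (Hpos : 0 < sqrt (1 + (y / x)²)).
  { apply sqrt_lt_R0. assert (0 <= (y / x)²) by apply Rle_0_sqr. lra. }
  destruct (Rlt_dec 0 x) as [Hx|Hx].
  - rewrite sqrt_sum_sqr_factor, Rabs_right, cos_atan, sin_atan by lra.
    split; field; lra.
  - destruct (Rlt_dec x 0) as [Hx'|Hx'].
    + rewrite sqrt_sum_sqr_factor, Rabs_left by lra.
      destruct (Rle_dec 0 y); unfold Rminus;
        rewrite cos_plus, sin_plus, ?cos_neg, ?sin_neg, cos_PI, sin_PI, cos_atan, sin_atan;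
        split; field; lra.
    + assert (x = 0) by lra. subst x.
      replace (0 ^ 2 + y ^ 2) with (Rsqr y) by (unfold Rsqr; ring).
      rewrite sqrt_Rsqr_abs.
      destruct (Rlt_dec 0 y); [|destruct (Rlt_dec y 0)].
      * rewrite Rabs_right, cos_PI2, sin_PI2 by lra. split; ring.
      * rewrite Rabs_left, cos_neg, sin_neg, cos_PI2, sin_PI2 by lra. split; ring.
      * exfalso. apply Ht. apply injective_projections; simpl; lra.
Qed.

Lemma Cexp_Clog (t : C) : t <> RtoC 0 -> Cexp (Clog t) = t.
Proof.
  intro Ht. destruct (Carg_polar t Ht) as [Hre Him].
  assert (Hm : 0 < Cmod t) by (apply Cmod_gt_0; exact Ht).
  unfold Cexp, Clog.
  replace (Re (RtoC (ln (Cmod t)) + Ci * RtoC (Carg t))%C) with (ln (Cmod t)) by (simpl; ring).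
  replace (Im (RtoC (ln (Cmod t)) + Ci * RtoC (Carg t))%C) with (Carg t) by (simpl; ring).
  rewrite exp_ln by exact Hm.
  unfold Re, Im in *. apply injective_projections; simpl; lra.
Qed.

Lemma Csqrt_mul_self (z : C) : (Csqrt z * Csqrt z)%C = z.
Proof.
  unfold Csqrt. destruct (Req_EM_T (Cmod z) 0) as [H|H].
  - apply Cmod_eq_0 in H. subst z. apply Cmult_0_l.
  - rewrite <- Cexp_add. replace (Clog z / 2 + Clog z / 2)%C with (Clog z) by field.
    apply Cexp_Clog. intro E. apply H. rewrite E. apply Cmod_0.
Qed.

Lemma Ci_mul_Ci : (Ci * Ci)%C = (- RtoC 1)%C.
Proof. apply injective_projections; simpl; ring. Qed.

(* With t = z + i sqrt(1 - z^2) one has t (z - i sqrt(1 - z^2)) = 1,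
   so e^{-Log t} = z - i sqrt(1 - z^2). *)
Lemma Ccos_Carccos (z : C) : Ccos (Carccos z) = z.
Proof.
  unfold Ccos, Carccos.
  set (S := Csqrt (1 - z * z)). set (t := (z + Ci * S)%C).
  assert (Hinv : (t * (z - Ci * S))%C = RtoC 1).
  { unfold t. replace ((z + Ci * S) * (z - Ci * S))%C with (z * z - (Ci * Ci) * (S * S))%C by ring.
    unfold S. rewrite Ci_mul_Ci, Csqrt_mul_self. ring. }
  assert (Ht : t <> RtoC 0).
  { intro E. rewrite E, Cmult_0_l in Hinv. apply C1_nz. symmetry. exact Hinv. }
  assert (Hopp : Cexp (- Clog t) = (z - Ci * S)%C).
  { transitivity ((Cexp (Clog t) * Cexp (- Clog t)) * (z - Ci * S))%C.
    - rewrite (Cexp_Clog t Ht).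
      transitivity (Cexp (- Clog t) * (t * (z - Ci * S)))%C; [rewrite Hinv|]; ring.
    - rewrite Cexp_mul_opp. ring. }
  replace (Ci * (- Ci * Clog t))%C with (- (Ci * Ci) * Clog t)%C by ring.
  rewrite Ci_mul_Ci. replace (- - RtoC 1 * Clog t)%C with (Clog t) by ring.
  rewrite Cexp_Clog, Hopp by exact Ht. unfold t. field.
Qed.

Lemma Cpowr_neq0 (z : C) (a : R) : z <> RtoC 0 -> Cpowr z a <> RtoC 0.
Proof.
  intro Hz. unfold Cpowr. destruct (Req_EM_T (Cmod z) 0) as [H|H].
  - apply Cmod_eq_0 in H. contradiction.
  - apply Cexp_neq0.
Qed.

Lemma Cpowr_plus1 (z : C) (a : R) : z <> RtoC 0 -> Cpowr z (a + 1) = (Cpowr z a * z)%C.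
Proof.
  intro Hz. unfold Cpowr. destruct (Req_EM_T (Cmod z) 0) as [H|H].
  - apply Cmod_eq_0 in H. contradiction.
  - rewrite <- (Cexp_Clog z Hz) at 3. rewrite <- Cexp_add, RtoC_plus. f_equal. ring.
Qed.

Lemma Carg_scal (c : R) (z : C) : 0 < c -> Carg (RtoC c * z)%C = Carg z.
Proof.
  intro Hc. destruct z as [x y].
  replace (RtoC c * (x, y))%C with (c * x, c * y) by (apply injective_projections; simpl; ring).
  unfold Carg, Re, Im; cbn [fst snd].
  destruct (Req_dec x 0) as [Hx|Hx].
  - subst x. rewrite Rmult_0_r.
    repeat match goal with |- context [Rlt_dec ?a ?b] => destruct (Rlt_dec a b)
                         | |- context [Rle_dec ?a ?b] => destruct (Rle_dec a b) end;
    try reflexivity; exfalso; nra.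
  - replace (c * y / (c * x)) with (y / x) by (field; lra).
    repeat match goal with |- context [Rlt_dec ?a ?b] => destruct (Rlt_dec a b)
                         | |- context [Rle_dec ?a ?b] => destruct (Rle_dec a b) end;
    try reflexivity; exfalso; nra.
Qed.

Lemma Cpowr_scal (c : R) (z : C) (a : R) : 0 < c -> z <> RtoC 0 ->
  Cpowr (RtoC c * z)%C a = (RtoC (Rpower c a) * Cpowr z a)%C.
Proof.
  intros Hc Hz. assert (Hm : 0 < Cmod z) by (apply Cmod_gt_0; exact Hz).
  assert (Hcm : Cmod (RtoC c * z)%C = c * Cmod z)
    by (rewrite Cmod_mult, Cmod_R, Rabs_right by lra; reflexivity).
  unfold Cpowr. rewrite Hcm.
  destruct (Req_EM_T (c * Cmod z) 0) as [H|_]; [nra|].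
  destruct (Req_EM_T (Cmod z) 0) as [H|_]; [lra|].
  unfold Clog. rewrite Carg_scal, Hcm, ln_mult, RtoC_plus by lra.
  replace (RtoC a * (RtoC (ln c) + RtoC (ln (Cmod z)) + Ci * RtoC (Carg z)))%C
    with (RtoC (a * ln c) + RtoC a * (RtoC (ln (Cmod z)) + Ci * RtoC (Carg z)))%C
    by (rewrite RtoC_mult; ring).
  rewrite Cexp_add. f_equal.
  unfold Rpower, Cexp. apply injective_projections; simpl; rewrite cos_0, sin_0; ring.
Qed.

(** * Products over roots of unity *)

Lemma Cprod_ext (n : nat) (F G : nat -> C) :
  (forall l, (l < n)%nat -> F l = G l) -> Cprod n F = Cprod n G.
Proof.
  induction n as [|n IH]; intro H; simpl; [reflexivity|].
  rewrite IH, H; [reflexivity | lia | intros; apply H; lia].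
Qed.

Lemma Cprod_mul (n : nat) (F G : nat -> C) :
  Cprod n (fun l => F l * G l)%C = (Cprod n F * Cprod n G)%C.
Proof. induction n as [|n IH]; simpl; [ring|]. rewrite IH. ring. Qed.

Lemma Cprod_const (n : nat) (a : C) : Cprod n (fun _ => a) = Cpow a n.
Proof. induction n as [|n IH]; simpl; [reflexivity|]. rewrite IH. ring. Qed.

Definition Cprimitive_root (k : nat) (e : C) : Prop :=
  Cpow e k = RtoC 1 /\ forall m, (0 < m < k)%nat -> Cpow e m <> RtoC 1.

Module CprodRootsOfUnity.
Import ssreflect ssrfun ssrbool eqtype ssrnat fintype bigop ssralg poly complex Rstruct.
Import GRing.Theory.

Definition to_complex (z : C) : R[i] := Complex z.1 z.2.

Lemma to_complex_inj : injective to_complex.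
Proof. by case=> a b [c d] [-> ->]. Qed.

Lemma to_complex1 : to_complex (RtoC 1) = 1%R.
Proof. by []. Qed.

Lemma to_complexB (x y : C) : to_complex (Cminus x y) = (to_complex x - to_complex y)%R.
Proof. by case: x => a b; case: y. Qed.

Lemma to_complexM (x y : C) : to_complex (Cmult x y) = (to_complex x * to_complex y)%R.
Proof. by case: x => a b; case: y. Qed.

Lemma to_complexX (x : C) (n : nat) : to_complex (Cpow x n) = (to_complex x ^+ n)%R.
Proof. by elim: n => [|n IH] //=; rewrite to_complexM IH exprS. Qed.

Lemma to_complex_prod (n : nat) (F : nat -> C) :
  to_complex (Cprod n F) = (\prod_(0 <= l < n) to_complex (F l))%R.
Proof.
by elim: n => [|n IH]; [rewrite big_geq | rewrite /= to_complexM IH big_nat_recr].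
Qed.

Lemma primitive_root_to_complex (k : nat) (e : C) :
  (0 < k)%N -> Cprimitive_root k e -> (k.-primitive_root (to_complex e))%R.
Proof.
move=> k_gt0 [ek em]; apply/andP; split => //; apply/forallP => i; apply/eqP.
have := ltn_ord i; rewrite leq_eqVlt => /orP[/eqP->|lt_ik].
  by rewrite eqxx; apply/unity_rootP; rewrite -to_complexX ek.
rewrite (ltn_eqF lt_ik); apply/negbTE/negP => /unity_rootP ei.
by apply: (em i.+1); [split; apply/ssrnat.ltP | apply: to_complex_inj; rewrite to_complexX ei].
Qed.

Lemma Cprod_sub_pow (k : nat) (e y : C) : (0 < k)%coq_nat -> Cprimitive_root k e ->
  Cprod k (fun l => Cminus y (Cpow e l)) = Cminus (Cpow y k) (RtoC 1).
Proof.
move=> /ssrnat.ltP k_gt0 /(primitive_root_to_complex _ _ k_gt0) prim.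
apply: to_complex_inj.
rewrite to_complex_prod to_complexB to_complexX to_complex1.
under eq_bigr do rewrite to_complexB to_complexX.
have := congr1 (fun p => (p.[to_complex y])%R) (factor_Xn_sub_1 prim).
rewrite horner_prod hornerD hornerN hornerXn hornerC.
by under eq_bigr do rewrite hornerXsubC.
Qed.

End CprodRootsOfUnity.

Lemma Cprod_one_sub_mul_pow (k : nat) (e x : C) : (0 < k)%nat -> Cprimitive_root k e ->
  Cprod k (fun l => RtoC 1 - x * Cpow e l)%C = (RtoC 1 - Cpow x k)%C.
Proof.
  intros Hk He. destruct (Ceq_dec x 0) as [Hx|Hx].
  - subst x. rewrite (Cprod_ext _ _ (fun _ => RtoC 1)) by (intros; ring).
    rewrite Cprod_const, Cpow_1_l. destruct k as [|k]; [lia|]. simpl. ring.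
  - rewrite (Cprod_ext _ _ (fun l => x * Cminus (/ x) (Cpow e l))%C)
      by (intros; unfold Cminus; field; exact Hx).
    rewrite Cprod_mul, Cprod_const, CprodRootsOfUnity.Cprod_sub_pow by assumption.
    unfold Cminus. rewrite Cpow_inv by exact Hx. field. apply Cpow_nz. exact Hx.
Qed.

Lemma cos_neq1 (x : R) : 0 < x < 2 * PI -> cos x <> 1.
Proof.
  intros Hx Hcos.
  assert (Hsin : sin x = 0).
  { assert (H := sin2_cos2 x). rewrite Hcos in H. unfold Rsqr in H.
    apply Rsqr_0_uniq. unfold Rsqr. lra. }
  destruct (sin_eq_O_2PI_0 x) as [H|[H|H]]; try lra.
  rewrite H, cos_PI in Hcos. lra.
Qed.

Lemma Cpow_Cexp_Ci_mul (t : R) (m : nat) :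
  Cpow (Cexp (Ci * RtoC t)) m = (cos (INR m * t), sin (INR m * t)).
Proof.
  rewrite <- Cexp_natmul, <- Cexp_Ci_mul. f_equal. rewrite RtoC_mult. ring.
Qed.

Lemma Cexp_primitive_root (k : nat) (t : R) : (0 < k)%nat -> Rabs t = 2 * PI / INR k ->
  Cprimitive_root k (Cexp (Ci * RtoC t)).
Proof.
  intros Hk Ht. assert (HK : 0 < INR k) by (apply lt_0_INR; exact Hk).
  assert (Hpi := PI_RGT_0).
  set (th := 2 * PI / INR k) in *.
  assert (Hsign : t = th \/ t = - th) by (unfold Rabs in Ht; destruct (Rcase_abs t); lra).
  split.
  - rewrite Cpow_Cexp_Ci_mul.
    destruct Hsign as [-> | ->];
      [replace (INR k * th) with (2 * PI) | replace (INR k * - th) with (- (2 * PI))];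
      try (unfold th; field; lra);
      rewrite ?cos_neg, ?sin_neg, cos_2PI, sin_2PI; apply injective_projections; simpl; ring.
  - intros m Hm E. rewrite Cpow_Cexp_Ci_mul in E. apply (f_equal fst) in E. simpl in E.
    assert (HM : 0 < INR m < INR k) by (split; [apply lt_0_INR | apply lt_INR]; lia).
    apply (cos_neq1 (INR m * th)).
    + split.
      * apply Rmult_lt_0_compat; [lra|]. unfold th. apply Rdiv_lt_0_compat; lra.
      * assert (0 < 2 * PI * (INR k - INR m) / INR k) by (apply Rdiv_lt_0_compat; nra).
        replace (INR m * th) with (2 * PI - 2 * PI * (INR k - INR m) / INR k)
          by (unfold th; field; lra).
        lra.
    + destruct Hsign as [<- | Hneg]; [exact E|].
      rewrite <- E, Hneg, <- cos_neg. f_equal. ring.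
Qed.

(** * Nonvanishing factors and the parameter w *)

Lemma RtoC_neq0 (x : R) : x <> 0 -> RtoC x <> RtoC 0.
Proof. intros Hx E. apply Hx, RtoC_inj, E. Qed.

Lemma one_sub_neq0 (y : C) : Cmod y < 1 -> (RtoC 1 - y)%C <> RtoC 0.
Proof.
  intros Hy E. replace y with (RtoC 1) in Hy
    by (transitivity (RtoC 1 - (RtoC 1 - y))%C; [rewrite E|]; ring).
  rewrite Cmod_1 in Hy. lra.
Qed.

Lemma Cmod_pow_lt1 (y : C) (n : nat) : Cmod y < 1 -> (0 < n)%nat -> Cmod (Cpow y n) < 1.
Proof.
  intros Hy Hn. rewrite Cmod_pow. apply pow_lt_1_compat; [split; [apply Cmod_ge_0|]|]; assumption.
Qed.

(* 1 - 2 X y + y^2 = (1 - e y)(1 - conj(e) y) with e = X + i sqrt(1 - X^2) of modulus 1. *)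
Lemma one_sub_2mul_add_sqr_neq0 (X : R) (y : C) : -1 <= X <= 1 -> Cmod y < 1 ->
  (RtoC 1 - RtoC 2 * y * RtoC X + y * y)%C <> RtoC 0.
Proof.
  intros HX Hy.
  set (S := sqrt (1 - X * X)).
  assert (HS : S * S = 1 - X * X) by (unfold S; apply sqrt_sqrt; nra).
  assert (Hunit : forall S', S' * S' = S * S -> Cmod (X, S') = 1).
  { intros S' HS'. unfold Cmod; simpl.
    match goal with |- sqrt ?a = 1 => replace a with 1 by nra end. apply sqrt_1. }
  replace (RtoC 1 - RtoC 2 * y * RtoC X + y * y)%C
    with ((RtoC 1 - (X, S) * y) * (RtoC 1 - (X, (- S)%R) * y))%C.
  - apply Cmult_neq_0; apply one_sub_neq0; rewrite Cmod_mult, Hunit by ring; lra.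
  - assert (Hsum : ((X, S) + (X, (- S)%R))%C = (RtoC 2 * RtoC X)%C)
      by (apply injective_projections; simpl; ring).
    assert (Hprod : ((X, S) * (X, (- S)%R))%C = RtoC 1)
      by (apply injective_projections; simpl; nra).
    transitivity (RtoC 1 - ((X, S) + (X, (- S)%R)) * y + ((X, S) * (X, (- S)%R)) * (y * y))%C;
      [ring | rewrite Hsum, Hprod; ring].
Qed.

Section Scale.

Variables b s : R.
Hypotheses (Hb : 0 < b) (Hs : 0 < s).

Lemma rf_mul_self : rf b s * rf b s = s * s + b * b.
Proof. unfold rf. rewrite sqrt_sqrt by nra. ring. Qed.

Lemma rf_pos : 0 < rf b s.
Proof. unfold rf. apply sqrt_lt_R0. nra. Qed.

Lemma b_lt_Rf : b < Rf b s.
Proof.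
  assert (H := rf_mul_self). assert (H0 := rf_pos). unfold Rf. nra.
Qed.

Lemma wf_eq : wf b s = (0, - (b / Rf b s)).
Proof.
  assert (H := b_lt_Rf). unfold wf. apply injective_projections; simpl; field; lra.
Qed.

Lemma Rf_mul_wf : (RtoC (Rf b s) * wf b s)%C = (- (Ci * RtoC b))%C.
Proof.
  assert (H := b_lt_Rf). rewrite wf_eq. apply injective_projections; simpl; field; lra.
Qed.

Lemma Cmod_wf_lt1 : Cmod (wf b s) < 1.
Proof.
  assert (H := b_lt_Rf). rewrite wf_eq.
  replace (0, - (b / Rf b s)) with (RtoC (b / Rf b s) * - Ci)%C
    by (apply injective_projections; simpl; ring).
  rewrite Cmod_mult, Cmod_opp, Cmod_R, Rabs_right.
  - assert (Hi : Cmod Ci = 1) by (unfold Cmod; simpl;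
      match goal with |- sqrt ?a = 1 => replace a with 1 by ring end; apply sqrt_1).
    rewrite Hi, Rmult_1_r, <- Rdiv_lt_1; lra.
  - apply Rle_ge, Rlt_le, Rdiv_lt_0_compat; lra.
Qed.

(* Since R^2 = 2 s R + b^2. *)
Lemma Rf_half_mul_one_add_wf_sqr : (RtoC (Rf b s / 2) * (RtoC 1 + wf b s * wf b s))%C = RtoC s.
Proof.
  assert (H := b_lt_Rf). assert (Hr := rf_mul_self). rewrite wf_eq.
  apply injective_projections; simpl.
  - unfold Rf in *. field_simplify_eq; [nra | lra].
  - field. lra.
Qed.

Lemma s_add_ib_half_sum_factor (T T' : C) : (T * T')%C = RtoC 1 ->
  (RtoC s + Ci * RtoC b * ((T + T') / RtoC 2))%C
  = (RtoC (Rf b s / 2) * ((RtoC 1 - wf b s * T) * (RtoC 1 - wf b s * T')))%C.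
Proof.
  intro HT.
  rewrite <- Rf_half_mul_one_add_wf_sqr.
  replace (Ci * RtoC b)%C with (- (RtoC (Rf b s) * wf b s))%C by (rewrite Rf_mul_wf; ring).
  replace (RtoC (Rf b s / 2)) with (RtoC (Rf b s) / RtoC 2)%C
    by (rewrite RtoC_div; [reflexivity | lra]).
  transitivity (RtoC (Rf b s) / RtoC 2 * (RtoC 1 - wf b s * T - wf b s * T'
                 + wf b s * wf b s * (T * T')))%C.
  - rewrite HT. field.
  - ring.
Qed.

Lemma Bf_mul_one_sub_wf_sqr (c : R) :
  ((RtoC s + Ci * RtoC b * RtoC c) * (RtoC 1 - Cpow (wf b s) 2))%C
  = (RtoC (rf b s) * (RtoC 1 - RtoC 2 * RtoC c * wf b s + Cpow (wf b s) 2))%C.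
Proof.
  assert (H := b_lt_Rf). assert (Hr := rf_mul_self).
  rewrite wf_eq. unfold Rf in *. set (r := rf b s) in *.
  assert (E2 : r ^ 2 = s ^ 2 + b ^ 2) by nra.
  assert (E3 : r ^ 3 = r * (s ^ 2 + b ^ 2)) by (rewrite <- E2; ring).
  apply injective_projections; simpl; field_simplify_eq; try lra; rewrite ?E3, ?E2; ring.
Qed.

(* w is purely imaginary with |w| < 1, so the real part 1 - |w|^2 is positive. *)
Lemma one_sub_2mul_wf_add_sqr_neq0 (c : R) :
  (RtoC 1 - RtoC 2 * RtoC c * wf b s + Cpow (wf b s) 2)%C <> RtoC 0.
Proof.
  intro E. apply (f_equal fst) in E. rewrite wf_eq in E. simpl in E.
  assert (H := b_lt_Rf).
  assert (Ht : 0 < b / Rf b s < 1) by (split; [apply Rdiv_lt_0_compat | rewrite <- Rdiv_lt_1]; lra).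
  nra.
Qed.

End Scale.

(** * Closed form of f and g *)

Lemma Cexp_Ci_mul_shift (k l : nat) (z : C) (t : R) : (0 < k)%nat ->
  Cexp (Ci * ((z + RtoC (t * INR l)) / RtoC (INR k)))%C
  = (Cexp (Ci * z / RtoC (INR k)) * Cpow (Cexp (Ci * RtoC (t / INR k))) l)%C.
Proof.
  intro Hk. assert (HK : 0 < INR k) by (apply lt_0_INR; exact Hk).
  rewrite <- Cexp_natmul, <- Cexp_add. f_equal.
  destruct z as [z1 z2]. apply injective_projections; simpl; field; lra.
Qed.

Lemma Ccos_shift_factor (k l : nat) (b s : R) (q : C) : (0 < k)%nat -> 0 < b -> 0 < s ->
  (RtoC s + Ci * RtoC b * Ccos ((q + RtoC (2 * PI * INR l)) / RtoC (INR k)))%C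
  = (RtoC (Rf b s / 2)
     * ((RtoC 1 - wf b s * Cexp (Ci * q / RtoC (INR k)) * Cpow (Cexp (Ci * RtoC (2 * PI / INR k))) l)
      * (RtoC 1 - wf b s * Cexp (Ci * - q / RtoC (INR k))
                * Cpow (Cexp (Ci * RtoC (- (2 * PI / INR k)))) l)))%C.
Proof.
  intros Hk Hb Hs.
  assert (HK : INR k <> 0) by (apply not_0_INR; lia).
  unfold Ccos. rewrite s_add_ib_half_sum_factor by (auto; apply Cexp_mul_opp).
  replace (- (Ci * ((q + RtoC (2 * PI * INR l)) / RtoC (INR k))))%C
    with (Ci * ((- q + RtoC (- (2 * PI) * INR l)) / RtoC (INR k)))%C
    by (rewrite <- Ropp_mult_distr_l, RtoC_opp; field; apply RtoC_neq0, HK).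
  rewrite !Cexp_Ci_mul_shift by exact Hk.
  replace (- (2 * PI) / INR k) with (- (2 * PI / INR k)) by (field; exact HK).
  ring.
Qed.

(* The k-th roots of unity e^{± 2 pi i l/k} collapse the products over l to
   1 - (w e^{± i q/k})^k. *)
Lemma Af_eq (k : nat) (b s : R) (q : C) : (0 < k)%nat -> 0 < b -> 0 < s ->
  Af k b s q = (RtoC ((Rf b s / 2) ^ k) *
     (RtoC 1 - RtoC 2 * Ccos q * Cpow (wf b s) k + Cpow (wf b s) (2 * k)))%C.
Proof.
  intros Hk Hb Hs.
  assert (HK : RtoC (INR k) <> RtoC 0) by (apply RtoC_neq0, not_0_INR; lia).
  assert (Hth : 0 < 2 * PI / INR k)
    by (apply Rdiv_lt_0_compat; [assert (H := PI_RGT_0); lra | apply lt_0_INR, Hk]).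
  assert (Hroot : forall t, Rabs t = 2 * PI / INR k -> Cprimitive_root k (Cexp (Ci * RtoC t)))
    by (intros; apply Cexp_primitive_root; assumption).
  assert (Hroot_pow : forall a, Cpow (Cexp (Ci * a / RtoC (INR k))) k = Cexp (Ci * a)).
  { intro a. rewrite <- Cexp_natmul. f_equal. field. exact HK. }
  unfold Af. rewrite (Cprod_ext _ _ _ (fun l _ => Ccos_shift_factor k l b s q Hk Hb Hs)).
  rewrite !Cprod_mul, Cprod_const, !Cprod_one_sub_mul_pow, !Cpow_mult_l
    by (auto; apply Hroot; rewrite ?Rabs_Ropp; apply Rabs_right; lra).
  rewrite !Hroot_pow, RtoC_pow.
  replace (2 * k)%nat with (k + k)%nat by lia. rewrite Cpow_add_r.
  replace (Ci * - q)%C with (- (Ci * q))%C by ring.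
  unfold Ccos.
  transitivity (Cpow (RtoC (Rf b s / 2)) k *
     (RtoC 1 - Cpow (wf b s) k * (Cexp (Ci * q) + Cexp (- (Ci * q)))
      + Cpow (wf b s) k * Cpow (wf b s) k * (Cexp (Ci * q) * Cexp (- (Ci * q)))))%C.
  - ring.
  - rewrite Cexp_mul_opp. field.
Qed.

Lemma Xf_bound (k : nat) (om et : C) (u v : R) : Cmod om = 1 -> Cmod et = 1 ->
  -1 <= u <= 1 -> -1 <= v <= 1 -> -1 <= Xf k om et u v <= 1.
Proof.
  intros Ho He Hu Hv. unfold Xf.
  assert (Ho' : Cmod (Cpow om k) = 1) by (rewrite Cmod_pow, Ho; apply pow1).
  assert (He' : Cmod (Cpow et k) = 1) by (rewrite Cmod_pow, He; apply pow1).
  destruct (Cpow om k) as [x1 y1], (Cpow et k) as [x2 y2].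
  unfold Cmod, Re, Im in *; cbn [fst snd] in *.
  assert (H1 : x1 * x1 + y1 * y1 = 1).
  { assert (H := sqrt_sqrt (x1 ^ 2 + y1 ^ 2) ltac:(nra)). rewrite Ho' in H. simpl in H. nra. }
  assert (H2 : x2 * x2 + y2 * y2 = 1).
  { assert (H := sqrt_sqrt (x2 ^ 2 + y2 ^ 2) ltac:(nra)). rewrite He' in H. simpl in H. nra. }
  assert (y2 * y2 * (u * u) <= y2 * y2) by (assert (u * u <= 1) by nra; nra).
  assert (x2 * x2 * (v * v) <= x2 * x2) by (assert (v * v <= 1) by nra; nra).
  assert (0 <= (y1 - y2 * u) ^ 2) by apply pow2_ge_0.
  assert (0 <= (y1 + y2 * u) ^ 2) by apply pow2_ge_0.
  assert (0 <= (x1 - x2 * v) ^ 2) by apply pow2_ge_0.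
  assert (0 <= (x1 + x2 * v) ^ 2) by apply pow2_ge_0.
  split; nra.
Qed.

Lemma Re_pow_mul_conj_pow (k : nat) (om et : C) :
  Re (Cpow om k * Cconj (Cpow et k)) = Xf k om et 1 1.
Proof. unfold Xf. destruct (Cpow om k), (Cpow et k). unfold Re, Im; simpl. ring. Qed.

Section ClosedForm.

Variables (k : nat) (b s : R) (om et : C).
Hypotheses (Hk : (1 <= k)%nat) (Hb : 0 < b) (Hs : 0 < s).

Let w := wf b s.
Let P := (Rf b s / 2) ^ k.
Let D (x : R) : C := (RtoC 1 - RtoC 2 * Cpow w k * RtoC x + Cpow w (2 * k))%C.

Lemma half_Rf_pow_pos : 0 < P.
Proof. apply pow_lt. assert (b < Rf b s) by (apply b_lt_Rf; assumption). lra. Qed.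

Lemma Bf_neq0 : Bf b om et s <> RtoC 0.
Proof. intro E. apply (f_equal fst) in E. unfold Bf in E. simpl in E. lra. Qed.

Lemma Af_Carccos (x : R) : Af k b s (Carccos (RtoC x)) = (RtoC P * D x)%C.
Proof. rewrite Af_eq, Ccos_Carccos by (auto; lia). unfold D, P, w. ring. Qed.

Lemma D_neq0 (x : R) : -1 <= x <= 1 -> D x <> RtoC 0.
Proof.
  intro Hx. unfold D. replace (2 * k)%nat with (k + k)%nat by lia. rewrite Cpow_add_r.
  apply one_sub_2mul_add_sqr_neq0; [exact Hx|].
  apply Cmod_pow_lt1; [apply Cmod_wf_lt1 | lia]; assumption.
Qed.

Lemma Cpowr_Af_Carccos (gam x : R) : -1 <= x <= 1 ->
  Cpowr (Af k b s (Carccos (RtoC x))) gam = (RtoC (Rpower P gam) * Cpowr (D x) gam)%C.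
Proof. intro Hx. rewrite Af_Carccos. apply Cpowr_scal; [apply half_Rf_pow_pos | apply D_neq0, Hx]. Qed.

Lemma fgen_prefactor (gam : R) :
  Rpower 2 (INR k * gam) / (rf b s * Rpower (Rf b s) (INR k * gam)) = / (rf b s * Rpower P gam).
Proof.
  assert (HR : b < Rf b s) by (apply b_lt_Rf; assumption).
  assert (Hr : 0 < rf b s) by (apply rf_pos; assumption).
  assert (Hsplit : Rpower (Rf b s) (INR k * gam) = Rpower P gam * Rpower 2 (INR k * gam)).
  { unfold P. rewrite <- Rpower_pow, Rpower_mult by lra. unfold Rpower.
    rewrite <- exp_plus, ln_div by lra. f_equal. ring. }
  rewrite Hsplit. assert (0 < Rpower 2 (INR k * gam)) by apply exp_pos.
  assert (0 < Rpower P gam) by apply exp_pos.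
  field. split; lra.
Qed.

Lemma fgen_eq_Af_ratio (gam X0 : R) : -1 <= X0 <= 1 ->
  fgen k b om et gam X0 s
  = (Af k b s (qf k om et 1 1)
     / (Bf b om et s * Cpowr (Af k b s (Carccos (RtoC X0))) (gam + 1)))%C.
Proof.
  intro HX.
  assert (Hr : 0 < rf b s) by (apply rf_pos; assumption).
  set (c := Re (om * Cconj et)).
  set (Dd := (RtoC 1 - RtoC 2 * RtoC c * w + Cpow w 2)%C).
  assert (HB := Bf_neq0).
  assert (HDd : Dd <> RtoC 0) by (apply one_sub_2mul_wf_add_sqr_neq0; assumption).
  assert (Hw2 : (RtoC 1 - Cpow w 2)%C = (RtoC (rf b s) * Dd / Bf b om et s)%C).
  { unfold Dd. rewrite <- Bf_mul_one_sub_wf_sqr by assumption.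
    unfold Bf in *. unfold c, w. field. exact HB. }
  assert (Hw2k : (RtoC 1 - Cpow w (2 * k))%C <> RtoC 0)
    by (apply one_sub_neq0, Cmod_pow_lt1; [apply Cmod_wf_lt1 | lia]; assumption).
  assert (HD := D_neq0 X0 HX).
  assert (HPgam : 0 < Rpower P gam) by apply exp_pos.
  assert (HP := half_Rf_pow_pos).
  unfold fgen, qf. cbv zeta. fold w. fold c Dd.
  rewrite fgen_prefactor, Re_pow_mul_conj_pow, Hw2.
  fold (D X0). rewrite Cpowr_Af_Carccos, !Af_Carccos, !Cpowr_plus1, Rpower_plus, Rpower_1 by assumption.
  rewrite RtoC_inv, !RtoC_mult by (apply Rmult_integral_contrapositive; split; lra).
  assert (HrC := RtoC_neq0 _ (Rgt_not_eq _ _ Hr)).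
  assert (HPC := RtoC_neq0 _ (Rgt_not_eq _ _ HP)).
  assert (HPgamC := RtoC_neq0 _ (Rgt_not_eq _ _ HPgam)).
  assert (Hgam := Cpowr_neq0 (D X0) gam HD).
  unfold D in *. field. repeat split; assumption.
Qed.

Lemma Af_ratio_split (gam X0 : R) : -1 <= X0 <= 1 ->
  (Af k b s (qf k om et 1 1)
   / (Bf b om et s * Cpowr (Af k b s (Carccos (RtoC X0))) (gam + 1)))%C
  = (RtoC 1 / (Bf b om et s * Cpowr (Af k b s (Carccos (RtoC X0))) gam)
     + Cpow (- (Ci * RtoC b)) k * RtoC (X0 - Xf k om et 1 1)
       / (RtoC (2 ^ (k - 1)) * Bf b om et s
          * Cpowr (Af k b s (Carccos (RtoC X0))) (gam + 1)))%C.
Proof.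
  intro HX.
  assert (HR : b < Rf b s) by (apply b_lt_Rf; assumption).
  assert (HB := Bf_neq0).
  assert (HD := D_neq0 X0 HX).
  assert (HPgam : 0 < Rpower P gam) by apply exp_pos.
  assert (HP := half_Rf_pow_pos).
  assert (HA0 : Af k b s (Carccos (RtoC X0)) <> RtoC 0).
  { rewrite Af_Carccos. apply Cmult_neq_0; [apply RtoC_neq0; lra | exact HD]. }
  assert (Hpow : Cpow (- (Ci * RtoC b)) k = (RtoC (2 * 2 ^ (k - 1) * P) * Cpow w k)%C).
  { rewrite <- (Rf_mul_wf b s) by assumption. rewrite Cpow_mult_l, <- RtoC_pow. unfold P, w.
    f_equal. f_equal.
    replace (2 * 2 ^ (k - 1)) with (2 ^ k)
      by (destruct k as [|k']; [lia|]; simpl; rewrite Nat.sub_0_r; reflexivity).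
    unfold Rdiv. rewrite Rpow_mult_distr, pow_inv. field. apply pow_nonzero. lra. }
  unfold qf. rewrite Cpowr_plus1, Cpowr_Af_Carccos, !Af_Carccos, Hpow by assumption.
  rewrite !RtoC_mult.
  assert (H2 := RtoC_neq0 _ (pow_nonzero 2 (k - 1) ltac:(lra))).
  assert (HPC := RtoC_neq0 _ (Rgt_not_eq _ _ HP)).
  assert (HPgamC := RtoC_neq0 _ (Rgt_not_eq _ _ HPgam)).
  assert (Hgam := Cpowr_neq0 (D X0) gam HD).
  unfold D in *. rewrite RtoC_minus. field. repeat split; assumption.
Qed.

End ClosedForm.

Theorem lemma15 (k : nat) (al be b : R) (om et : C) (u v : R) :
  (1 <= k)%nat -> 0 < al -> 0 < be -> 0 < b ->
  Cmod om = 1 -> Cmod et = 1 ->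
  -1 <= u <= 1 -> -1 <= v <= 1 ->
  exists S : R, forall s : R, S < s ->
    (f_I2k k al be b om et u v s
       = (Af k b s (qf k om et 1 1)
          / (Bf b om et s * Cpowr (Af k b s (qf k om et u v)) (al + be + 1)))%C
     /\ (Af k b s (qf k om et 1 1)
          / (Bf b om et s * Cpowr (Af k b s (qf k om et u v)) (al + be + 1)))%C
       = (RtoC 1 / (Bf b om et s * Cpowr (Af k b s (qf k om et u v)) (al + be))
          + Cpow (- (Ci * RtoC b)) k * Ccos (qf k om et (u - 1) (v - 1))
            / (RtoC (2 ^ (k - 1)) * Bf b om et s
               * Cpowr (Af k b s (qf k om et u v)) (al + be + 1)))%C)
    /\
    (g_Ik k al b om et u s
       = (Af k b s (qf k om et 1 1)
          / (Bf b om et s * Cpowr (Af k b s (qf k om et u 1)) (al + 1)))%C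
     /\ (Af k b s (qf k om et 1 1)
          / (Bf b om et s * Cpowr (Af k b s (qf k om et u 1)) (al + 1)))%C
       = (RtoC 1 / (Bf b om et s * Cpowr (Af k b s (qf k om et u 1)) al)
          + Cpow (- (Ci * RtoC b)) k * Ccos (qf k om et (u - 1) 0)
            / (RtoC (2 ^ (k - 1)) * Bf b om et s
               * Cpowr (Af k b s (qf k om et u 1)) (al + 1)))%C).
Proof.
  intros Hk _ _ Hb Ho He Hu Hv.
  exists 0. intros s Hs.
  assert (HX : -1 <= Xf k om et u v <= 1) by (apply Xf_bound; assumption).
  assert (HX1 : -1 <= Xf k om et u 1 <= 1) by (apply Xf_bound; auto; lra).
  assert (Hcos : Ccos (qf k om et (u - 1) (v - 1)) = RtoC (Xf k om et u v - Xf k om et 1 1))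
    by (unfold qf; rewrite Ccos_Carccos; f_equal; unfold Xf; ring).
  assert (Hcos1 : Ccos (qf k om et (u - 1) 0) = RtoC (Xf k om et u 1 - Xf k om et 1 1))
    by (unfold qf; rewrite Ccos_Carccos; f_equal; unfold Xf; ring).
  rewrite Hcos, Hcos1.
  split; split.
  - apply fgen_eq_Af_ratio; assumption.
  - apply Af_ratio_split; assumption.
  - apply fgen_eq_Af_ratio; assumption.
  - apply Af_ratio_split; assumption.
Qed.
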